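(* Let $f^w:\mathbb{R}^n\to\mathbb{R}^C$ be a feed-forward neural network with weight vector $w$, computed as $\phi^w_{(0)}=x$, $f^w_{(k)}=W^w_{k-1}\phi^w_{(k-1)}+b^w_{k-1}$ for $k=1,\ldots,K$, $\phi^w_{(k)}=h(f^w_{(k)})$ for $k=1,\ldots,K-1$, and $f^w(x)=f^w_{(K)}$, where $h$ is a monotonically non-decreasing activation function applied componentwise. Let $x\in\mathbb{R}^n$ be an input point with class label $y\in\{1,\ldots,C\}$, and let $p_\epsilon$ be a probability distribution on $\mathbb{R}_{\geq 0}$. Then $$p(y\mid x,w)\;\geq\;\mathbb{E}_{\epsilon\sim p_\epsilon}\big[\sigma_y(f^{w,\epsilon}_{LB}(x))\big]=:p_{\text{IBP}}(y\mid x,w),$$ where $p(y\mid x,w)$ is the robust likelihood and $f^{w,\epsilon}_{LB}(x)$ the IBP lower-bound logit vector, as defined in the context.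
   Context: $\sigma:\mathbb{R}^C\to\mathbb{R}^C$ is the softmax, $\sigma_c(z)=e^{z_c}/\sum_{j=1}^C e^{z_j}$. For $\epsilon\geq 0$, $f^{w,\epsilon}_{\min}(x)$ denotes a logit vector satisfying $\sigma_y(f^{w,\epsilon}_{\min}(x))=\min_{x':\|x-x'\|_\infty\leq\epsilon}\sigma_y(f^w(x'))$. The robust likelihood is $p(y\mid x,w)=\mathbb{E}_{\epsilon\sim p_\epsilon}[\sigma_y(f^{w,\epsilon}_{\min}(x))]=\int_{\mathbb{R}_{\ge0}}\sigma_y(f^{w,\epsilon}_{\min}(x))p_\epsilon(\epsilon)\,d\epsilon$. Interval Bound Propagation (IBP): for $\epsilon\ge0$ set $\phi^{w,L}_{(0)}=x-\epsilon\mathbf{1}$, $\phi^{w,U}_{(0)}=x+\epsilon\mathbf{1}$, and for $k=1,\ldots,K$: $\hat\mu_k=(\phi^{w,U}_{(k-1)}+\phi^{w,L}_{(k-1)})/2$, $\hat r_k=(\phi^{w,U}_{(k-1)}-\phi^{w,L}_{(k-1)})/2$, $\mu_k=W^w_{k-1}\hat\mu_k+b^w_{k-1}$, $r_k=|W^w_{k-1}|\hat r_k$ (entrywise absolute value), $f^{w,U}_{(k)}=\mu_k+r_k$, $f^{w,L}_{(k)}=\mu_k-r_k$, and $\phi^{w,U}_{(k)}=h(f^{w,U}_{(k)})$, $\phi^{w,L}_{(k)}=h(f^{w,L}_{(k)})$. Set $f^{w,U,\epsilon}=f^{w,U}_{(K)}$, $f^{w,L,\epsilon}=f^{w,L}_{(K)}$.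 The vector $f^{w,\epsilon}_{LB}(x)\in\mathbb{R}^C$ has entries $f^{w,\epsilon}_{LB,j}(x)=f^{w,U,\epsilon}_j$ if $j\neq y$ and $f^{w,\epsilon}_{LB,j}(x)=f^{w,L,\epsilon}_j$ if $j=y$. *)

From HB Require Import structures.
From mathcomp Require Import all_boot all_order all_algebra.
From mathcomp Require Import all_classical all_reals all_analysis.
Set Implicit Arguments. Unset Strict Implicit. Unset Printing Implicit Defensive.
Import Order.TTheory GRing.Theory Num.Theory.
Local Open Scope ring_scope.

(* NLast W b        : last (K-th) layer, logits  W x + b  (no activation)
   NLayer W b N     : hidden layer  phi = h (W x + b), followed by network N. *)
Inductive net (R : Type) : nat -> nat -> Type :=
| NLast n C of 'M[R]_(C, n) & 'cV[R]_C : net R n C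
| NLayer n m C of 'M[R]_(m, n) & 'cV[R]_m & net R m C : net R n C.

Fixpoint net_eval (R : pzRingType) (h : R -> R) n C (N : net R n C)
  : 'cV[R]_n -> 'cV[R]_C :=
  match N in net _ n C return 'cV[R]_n -> 'cV[R]_C with
  | NLast _ _ W b => fun x => W *m x + b
  | NLayer _ _ _ W b N' => fun x => net_eval h N' (map_mx h (W *m x + b))
  end.

Fixpoint ibp (R : realFieldType) (h : R -> R) n C (N : net R n C)
  : 'cV[R]_n -> 'cV[R]_n -> 'cV[R]_C * 'cV[R]_C :=
  match N in net _ n C return 'cV[R]_n -> 'cV[R]_n -> 'cV[R]_C * 'cV[R]_C with
  | NLast _ _ W b => fun L U =>
      let mu := W *m (2^-1 *: (U + L)) + b in
      let r := map_mx (fun a => `|a|) W *m (2^-1 *: (U - L)) in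
      (mu - r, mu + r)
  | NLayer _ _ _ W b N' => fun L U =>
      let mu := W *m (2^-1 *: (U + L)) + b in
      let r := map_mx (fun a => `|a|) W *m (2^-1 *: (U - L)) in
      ibp h N' (map_mx h (mu - r)) (map_mx h (mu + r))
  end.

Definition softmax (R : realType) C (z : 'cV[R]_C) (c : 'I_C) : R :=
  expR (z c 0) / \sum_(j < C) expR (z j 0).

Definition f_LB (R : realType) (h : R -> R) n C (N : net R n C)
  (x : 'cV[R]_n) (y : 'I_C) (eps : R) : 'cV[R]_C :=
  let LU := ibp h N (x - const_mx eps) (x + const_mx eps) in
  \col_j (if j == y then LU.1 j 0 else LU.2 j 0).

Definition in_linf_ball (R : realType) n (x x' : 'cV[R]_n) (eps : R) : Prop :=
  forall i, `|x i 0 - x' i 0| <= eps.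

Definition is_fmin (R : realType) (h : R -> R) n C (N : net R n C)
  (x : 'cV[R]_n) (y : 'I_C) (eps : R) (v : 'cV[R]_C) : Prop :=
  (exists2 x', in_linf_ball x x' eps & softmax v y = softmax (net_eval h N x') y) /\
  (forall x', in_linf_ball x x' eps -> softmax v y <= softmax (net_eval h N x') y).

Local Open Scope classical_set_scope.

Definition robust_lik (R : realType) C (P : probability R R) (fmin : R -> 'cV[R]_C)
  (y : 'I_C) : \bar R :=
  (\int[P]_(e in [set e : R | (0 <= e)%R]) (softmax (fmin e) y)%:E)%E.

Definition p_IBP (R : realType) (h : R -> R) n C (N : net R n C) (P : probability R R)
  (x : 'cV[R]_n) (y : 'I_C) : \bar R :=
  (\int[P]_(e in [set e : R | (0 <= e)%R]) (softmax (f_LB h N x y e) y)%:E)%E.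

(* Interval bound propagation is sound: for monotone activations, every network
   output on the box [x - eps, x + eps] lies componentwise between the IBP bounds.
   Since sigma_y increases with the y-th logit and decreases with the others, the
   vector f_LB (lower bound at y, upper bounds elsewhere) gives a smaller sigma_y
   than any point of the l_oo-ball, in particular than the minimiser f_min.  The
   inequality of expectations then follows from monotonicity of the integral. *)

From HB Require Import structures.
From mathcomp Require Import all_boot all_order all_algebra.
From mathcomp Require Import all_classical all_reals all_analysis.
From mathcomp Require Import lra.
Set Implicit Arguments. Unset Strict Implicit. Unset Printing Implicit Defensive.
Import Order.TTheory GRing.Theory Num.Theory.
Local Open Scope ring_scope.
Local Open Scope classical_set_scope.

Section IntervalArithmetic.
Variable R : realFieldType.

Lemma mulr_interval_bound (w : R) (l u z : R) : l <= z <= u ->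
  w * (2^-1 * (u + l)) - `|w| * (2^-1 * (u - l)) <= w * z <=
  w * (2^-1 * (u + l)) + `|w| * (2^-1 * (u - l)).
Proof.
case/andP=> lz zu; have [w0|w0] := lerP 0 w.
  by rewrite ger0_norm //; apply/andP; split; nra.
by rewrite ltr0_norm //; apply/andP; split; nra.
Qed.

Lemma affine_interval_bound m n (W : 'M[R]_(m, n)) (b : 'cV[R]_m)
    (L U x : 'cV[R]_n) :
  (forall i, L i 0 <= x i 0 <= U i 0) -> forall j,
  (W *m (2^-1 *: (U + L)) + b - map_mx (fun a => `|a|) W *m (2^-1 *: (U - L))) j 0
    <= (W *m x + b) j 0 <=
  (W *m (2^-1 *: (U + L)) + b + map_mx (fun a => `|a|) W *m (2^-1 *: (U - L))) j 0.
Proof.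
move=> Lxu j; rewrite !mxE.
have bound k := mulr_interval_bound (W j k) (Lxu k).
apply/andP; split; rewrite addrAC lerD2r.
  by rewrite -sumrB; apply: ler_sum => k _; rewrite !mxE; case/andP: (bound k).
by rewrite -big_split; apply: ler_sum => k _; rewrite !mxE; case/andP: (bound k).
Qed.

Lemma ibp_sound (h : R -> R) : {homo h : a b / a <= b} ->
  forall n C (N : net R n C) (L U x : 'cV[R]_n),
  (forall i, L i 0 <= x i 0 <= U i 0) ->
  forall j, (ibp h N L U).1 j 0 <= net_eval h N x j 0 <= (ibp h N L U).2 j 0.
Proof.
move=> h_homo n C N; elim: N => [n' C' W b | n' m C' W b N IH] L U x Lxu /=.
  exact: affine_interval_bound.
apply: IH => i; have := affine_interval_bound W b Lxu i.
by rewrite !mxE => /andP[lo hi]; rewrite !h_homo.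
Qed.

End IntervalArithmetic.

Lemma in_linf_ball_box (R : realType) n (x x' : 'cV[R]_n) (eps : R) :
  in_linf_ball x x' eps ->
  forall i, (x - const_mx eps) i 0 <= x' i 0 <= (x + const_mx eps) i 0.
Proof. by move=> xx' i; rewrite !mxE -ler_distlC xx'. Qed.

Section Softmax.
Variables (R : realType) (C : nat).

Lemma sum_expR_gt0 (z : 'cV[R]_C) (c : 'I_C) : 0 < \sum_(j < C) expR (z j 0).
Proof.
rewrite (bigD1 c) //= ltr_pwDl ?expR_gt0 //.
by apply: sumr_ge0 => j _; exact: expR_ge0.
Qed.

Lemma softmax_ge0 (z : 'cV[R]_C) (c : 'I_C) : 0 <= softmax z c.
Proof. by rewrite divr_ge0 ?expR_ge0 // ltW // (sum_expR_gt0 z c). Qed.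

Lemma ler_softmax (a b : 'cV[R]_C) (y : 'I_C) :
  a y 0 <= b y 0 -> (forall j, j != y -> b j 0 <= a j 0) ->
  softmax a y <= softmax b y.
Proof.
move=> ab_y ba_j; rewrite /softmax.
rewrite ler_pdivrMr ?(sum_expR_gt0 _ y) // mulrAC ler_pdivlMr ?(sum_expR_gt0 _ y) //.
rewrite (bigD1 y) //= [X in _ <= _ * X](bigD1 y) //= !mulrDr mulrC lerD2l.
apply: ler_pM; rewrite ?expR_ge0 ?ler_expR //.
- by apply: sumr_ge0 => j _; exact: expR_ge0.
- by apply: ler_sum => j /ba_j; rewrite ler_expR.
Qed.

End Softmax.

Lemma softmax_f_LB_le_fmin (R : realType) (h : R -> R) n C (N : net R n C)
    (x : 'cV[R]_n) (y : 'I_C) (eps : R) (v : 'cV[R]_C) :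
  {homo h : a b / a <= b} -> is_fmin h N x y eps v ->
  softmax (f_LB h N x y eps) y <= softmax v y.
Proof.
move=> h_homo [[x' /in_linf_ball_box xx' ->] _].
have bounds := ibp_sound h_homo N xx'.
apply: ler_softmax => [|j /negbTE jy]; rewrite /f_LB mxE ?eqxx ?jy.
  by case/andP: (bounds y).
by case/andP: (bounds j).
Qed.

(* For nonnegative integrands the integral is the supremum of the integrals of
   dominated simple functions, so monotonicity needs no measurability. *)
Lemma ge0_le_integral_nomeas d (T : measurableType d) (R : realType)
    (mu : {measure set T -> \bar R}) (D : set T) (f g : T -> \bar R) :
  (forall t, D t -> 0 <= f t)%E -> (forall t, D t -> f t <= g t)%E ->
  (\int[mu]_(t in D) f t <= \int[mu]_(t in D) g t)%E.
Proof.
move=> f0 fg; have g0 t : D t -> (0 <= g t)%E.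
  by move=> Dt; apply: le_trans (fg t Dt); exact: f0.
rewrite (ge0_integralE mu f0) (ge0_integralE mu g0).
apply: ge_ereal_sup => _ [s sf <-]; apply: ereal_sup_ubound.
exists s => // t; apply: le_trans (sf t) _.
by rewrite /patch; case: ifP => // /set_mem /fg.
Qed.

Theorem proposition1 (R : realType) (n C : nat) (h : R -> R) (N : net R n C)
  (x : 'cV[R]_n) (y : 'I_C) (P : probability R R) (fmin : R -> 'cV[R]_C) :
  {homo h : a b / a <= b} ->
  P [set e : R | (0 <= e)%R] = 1%E ->
  (forall eps : R, 0 <= eps -> is_fmin h N x y eps (fmin eps)) ->
  measurable_fun [set e : R | (0 <= e)%R] (fun e => softmax (fmin e) y) ->
  (p_IBP h N P x y <= robust_lik P fmin y)%E.
Proof.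
move=> h_homo _ fmin_spec _.
apply: ge0_le_integral_nomeas => [eps _|eps eps0]; first by rewrite lee_fin softmax_ge0.
by rewrite lee_fin (softmax_f_LB_le_fmin h_homo (fmin_spec eps eps0)).
Qed.
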